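(* For every $d\ge 2$, $\mu(\mathit{BF}(d))=2^{d+1}-2$.
   Context: Binary strings $c=c_0\cdots c_{d-1}$ have positions $0,\dots,d-1$ from the left; $c(i)$ is $c$ with bit $i$ complemented. $\mathit{BF}(d)$ has vertex set $\{[\ell,c]:\ell\in\{0,\dots,d\},\ c\in\{0,1\}^d\}$; for $\ell\in\{0,\dots,d-1\}$, $[\ell,c]$ is adjacent to $[\ell+1,c']$ iff $c'=c$ or $c'=c(\ell)$, and there are no other edges. For a connected graph $G$ and $X\subseteq V(G)$, two vertices $x,y$ are $X$-visible if some shortest $x,y$-path has no internal vertex in $X$; $X$ is a mutual-visibility set if every two vertices of $X$ are $X$-visible; $\mu(G)$ is the maximum size of a mutual-visibility set. *)

From mathcomp Require Import all_boot.
Set Implicit Arguments. Unset Strict Implicit. Unset Printing Implicit Defensive.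

Section Visibility.
Variable T : finType.
Variable e : rel T.

(* p = [v1; ...; vk] is a walk from x to y: x - v1 - ... - vk = y ; length = size p *)
Definition walk (x y : T) (p : seq T) : bool := path e x p && (last x p == y).

Definition shortest (x y : T) (p : seq T) : Prop :=
  walk x y p /\ forall q, walk x y q -> size p <= size q.

(* internal vertices of the walk x :: p : all of them except x and last x p *)
Definition internal (x : T) (p : seq T) : seq T := behead (belast x p).

Definition Xvisible (X : {set T}) (x y : T) : Prop :=
  exists p, shortest x y p /\ all (fun v => v \notin X) (internal x p).

Definition mutual_visibility_set (X : {set T}) : Prop :=
  forall x y, x \in X -> y \in X -> x != y -> Xvisible X x y.

Definition is_mu (k : nat) : Prop :=
  (exists X : {set T}, mutual_visibility_set X /\ #|X| = k) /\
  (forall X : {set T}, mutual_visibility_set X -> #|X| <= k).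
End Visibility.

(* Butterfly graph BF(d): vertices [l, c], l in {0..d}, c in {0,1}^d *)
Definition bf_vertex (d : nat) : finType := ('I_d.+1 * {ffun 'I_d -> bool})%type.

Definition flipb (d : nat) (c : {ffun 'I_d -> bool}) (i : 'I_d) : {ffun 'I_d -> bool} :=
  [ffun j => if j == i then ~~ c j else c j].

(* [l,c] -> [l+1,c'] with c' = c or c' = c(l) *)
Definition bf_arc (d : nat) (u v : bf_vertex d) : bool :=
  (val v.1 == (val u.1).+1) &&
  [exists i : 'I_d, (val i == val u.1) && ((v.2 == u.2) || (v.2 == flipb u.2 i))].

Definition bf_adj (d : nat) : rel (bf_vertex d) := fun u v => bf_arc u v || bf_arc v u.
Arguments bf_adj d : clear implicits.

From mathcomp Require Import all_boot zify.
Set Implicit Arguments. Unset Strict Implicit. Unset Printing Implicit Defensive.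

(* Write a vertex as [l, c]. Along an edge only the level changes by one and
   only the bit at the lower level may flip, so a walk changing bit m passes
   through levels m and m+1, and a walk from [i, b] to [j, t] of length j - i
   is a monotone ladder, determined by its ends.

   Lower bound: the vertices of levels 0 and d other than [0, 0...0] and
   [d, 0...0] are mutually visible. Two of them at level 0 are joined by the
   geodesic that climbs to the level above their highest differing bit and
   descends again; its top vertex can be chosen with zero low bits, so that at
   level d it is the excluded vertex. Two vertices at level d are handled by
   symmetry, and a vertex at level 0 sees one at level d along a ladder.

   Upper bound: a column {[l, c] : l} is the unique geodesic between any two of
   its vertices, so it meets a mutual-visibility set X at most twice. If X had
   more than 2^(d+1) - 2 vertices, every column would meet X and at most one
   column would be thin (meet X once). A vertex u of X cannot lie strictly
   inside a ladder between two other vertices of X; if nothing of X lies above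
   (below) u on a ladder, a detour argument shows that the column obtained by
   flipping the bit that u crosses going up (down) is thin. Using the mirror symmetry
   [l, c] |-> [d - l, reversed c], this forces all of level 0 into X. But then
   two vertices of X above level 0 whose columns differ only in bit 0 cannot
   see each other, as every path between them goes through level 0. *)

Section Walks.
Variables (T : finType) (e : rel T).

Lemma walk_nil x y : walk e x y [::] = (x == y).
Proof. by []. Qed.

Lemma walk_cons x y z p : walk e x y (z :: p) = e x z && walk e z y p.
Proof. by rewrite /walk /= andbA. Qed.

Lemma walk_last x y p : walk e x y p -> last x p = y.
Proof. by case/andP=> _ /eqP. Qed.

Lemma walk_cat x y p1 p2 :
  walk e x y (p1 ++ p2) = walk e x (last x p1) p1 && walk e (last x p1) y p2.
Proof. by rewrite /walk cat_path last_cat eqxx andbT andbA. Qed.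

Lemma walk_split x y p w : walk e x y p -> w \in x :: p ->
  exists p1 p2, [/\ p = p1 ++ p2, walk e x w p1 & walk e w y p2].
Proof.
move=> wp pw; case/splitPl: pw wp => p1 p2 lw; rewrite walk_cat lw => /andP[w1 w2].
by exists p1, p2.
Qed.

Lemma walk_rev x y p : symmetric e -> walk e x y p -> walk e y x (rev (belast x p)).
Proof.
move=> esym /andP[px /eqP <-]; rewrite /walk rev_path.
rewrite (eq_path (e' := e)) ?px => [|u v]; last exact: esym.
by case: p {px} => //= z p; rewrite rev_cons last_rcons.
Qed.

Lemma internal_rcons (x y : T) q : internal x (rcons q y) = q.
Proof. by rewrite /internal belast_rcons. Qed.

Lemma mem_internal x y p w : walk e x y p -> w \in x :: p -> w != x -> w != y ->
  w \in internal x p.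
Proof.
move=> /walk_last; case/lastP: p => [_|q z]; first by rewrite inE => /eqP ->; rewrite eqxx.
rewrite last_rcons internal_rcons => <-.
by rewrite inE mem_rcons inE => /orP[/eqP->|/orP[/eqP->|//]]; rewrite eqxx.
Qed.

Lemma mem_internal_cat (x w : T) p1 p2 : w \in internal x (p1 ++ p2) ->
  [\/ w \in internal x p1, w = last x p1 | w \in internal (last x p1) p2].
Proof.
case/lastP: p1 => [|q z]; first by move=> ?; apply: Or33.
rewrite /internal belast_cat last_rcons belast_rcons mem_cat => /orP[]; first exact: Or31.
by case: p2 => [|y p2] //=; rewrite inE => /orP[/eqP|]; [apply: Or32|apply: Or33].
Qed.

Lemma mem_internal_rev x y p w : walk e x y p ->
  (w \in internal y (rev (belast x p))) = (w \in internal x p).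
Proof.
move/walk_last; case/lastP: p => [//|q z]; rewrite last_rcons => ->.
by rewrite belast_rcons rev_cons !internal_rcons mem_rev.
Qed.

Lemma Xvisible_walk (X : {set T}) x y p : walk e x y p ->
  (forall q, walk e x y q -> size p <= size q) ->
  all (fun v => v \notin X) (internal x p) -> Xvisible e X x y.
Proof. by move=> wp minp avoid; exists p. Qed.

Lemma not_Xvisible (X : {set T}) x y q : walk e x y q ->
  (forall p, walk e x y p -> size p <= size q ->
     exists2 w, w \in x :: p & [/\ w \in X, w != x & w != y]) ->
  ~ Xvisible e X x y.
Proof.
move=> wq block [p [[wp minp] avoid]].
have [w wp' [wX wx wy]] := block p wp (minp q wq).
by have := allP avoid w (mem_internal wp wp' wx wy); rewrite wX.
Qed.

End Walks.

Section WalkMap.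
Variables (T : finType) (e : rel T) (f : T -> T).
Hypotheses (fK : involutive f) (f_edge : forall x y, e (f x) (f y) = e x y).

Lemma walk_map x y p : walk e (f x) (f y) (map f p) = walk e x y p.
Proof.
rewrite /walk last_map (inj_eq (inv_inj fK)); congr andb.
by elim: p x => //= z p IH x; rewrite f_edge IH.
Qed.

Lemma Xvisible_map (X : {set T}) x y :
  Xvisible e X x y -> Xvisible e (f @: X) (f x) (f y).
Proof.
case=> p [[wp minp] avoid]; exists (map f p); split; first split.
- by rewrite walk_map.
- by move=> q wq; rewrite size_map -(size_map f q) minp // -walk_map mapK.
- rewrite /internal belast_map behead_map all_map; apply: sub_all avoid => v /=.
  by rewrite mem_imset //; apply: inv_inj.
Qed.

Lemma mutual_visibility_map (X : {set T}) :
  mutual_visibility_set e X -> mutual_visibility_set e (f @: X).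
Proof.
move=> mv _ _ /imsetP[x xX ->] /imsetP[y yX ->] nxy.
by apply/Xvisible_map/mv => //; apply: contraNneq nxy => ->.
Qed.

End WalkMap.

Section GradedWalks.
Variables (T : finType) (e : rel T) (h : T -> nat).
Hypothesis e_step : forall x y, e x y -> h y = (h x).+1 \/ h x = (h y).+1.

Lemma walk_level_bound x y p : walk e x y p ->
  h y <= h x + size p /\ h x <= h y + size p.
Proof.
elim: p x => [|z p IH] x; first by rewrite walk_nil => /eqP ->; lia.
by rewrite walk_cons /= => /andP[/e_step xz /IH]; lia.
Qed.

Lemma walk_level_ivt x y p k : walk e x y p ->
  h x <= k <= h y \/ h y <= k <= h x -> exists2 w, w \in x :: p & h w = k.
Proof.
elim: p x => [|z p IH] x.
  by rewrite walk_nil => /eqP -> hk; exists y; rewrite ?mem_head //; lia.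
rewrite walk_cons => /andP[/e_step xz wz] hk.
have [<-|ne] := eqVneq (h x) k; first by exists x; rewrite ?mem_head.
have [w wp hw] := IH z wz ltac:(lia).
by exists w; rewrite // inE wp orbT.
Qed.

Lemma walk_level_via x y p w : walk e x y p -> w \in x :: p ->
  h w + h w <= h x + h y + size p /\ h x + h y <= h w + h w + size p.
Proof.
move=> wp /(walk_split wp)[p1 [p2 [-> /walk_level_bound b1 /walk_level_bound b2]]].
rewrite size_cat; lia.
Qed.

End GradedWalks.

Lemma sum_le_deficit (I : finType) (f : I -> nat) : (forall i, f i <= 2) ->
  (exists i, f i = 0) \/ (exists i j, [/\ i != j, f i <= 1 & f j <= 1]) ->
  \sum_i f i <= 2 * #|I| - 2.
Proof.
move=> f_le2 deficit.
have total : \sum_i f i + \sum_i (2 - f i) = 2 * #|I|.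
  rewrite -big_split /= (eq_bigr (fun=> 2)) => [|i _]; last by rewrite subnKC.
  by rewrite sum_nat_const mulnC.
suff : 2 <= \sum_i (2 - f i) by lia.
case: deficit => [[i fi]|[i [j [ij fi fj]]]]; first by rewrite (bigD1 i) //= fi leq_addr.
rewrite (bigD1 i) //= (bigD1 j) 1?eq_sym //=.
by set rest := \sum_(k | _) _; lia.
Qed.

Lemma exists_max_diff n (T : eqType) (c c' : {ffun 'I_n -> T}) : c != c' ->
  exists m : 'I_n, c m != c' m /\ forall j : 'I_n, m < j -> c j = c' j.
Proof.
move=> ne; have /existsP[j0 h] : [exists j, c j != c' j].
  by apply: contraNT ne => /existsPn h; apply/eqP/ffunP => j; apply/eqP/negPn/h.
case: (@arg_maxnP _ j0 (fun j => c j != c' j) (fun i : 'I_n => nat_of_ord i) h) => m cm mmax.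
by exists m; split=> // j mj; apply/eqP; apply: contraTT mj => /mmax; rewrite -leqNgt.
Qed.

Section Butterfly.
Variable d : nat.
Local Notation V := (bf_vertex d).
Local Notation B := {ffun 'I_d -> bool}.
Local Notation adj := (bf_adj d).

Definition level (v : V) : nat := v.1.
Definition vtx (k : nat) (c : B) : V := (inord k, c).
Definition flipbit (c : B) (k : nat) : B :=
  [ffun j : 'I_d => if nat_of_ord j == k then ~~ c j else c j].
Definition splice (t b : B) (k : nat) : B :=
  [ffun j : 'I_d => if j < k then t j else b j].

Lemma level_le v : level v <= d.
Proof. by rewrite -ltnS ltn_ord. Qed.

Lemma level_vtx k c : k <= d -> level (vtx k c) = k.
Proof. by move=> kd; rewrite /level /= inordK. Qed.

Lemma vtx_level v : vtx (level v) v.2 = v.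
Proof. by case: v => l c; rewrite /vtx /level /= inord_val. Qed.

Lemma vertex_eq (u v : V) : level u = level v -> u.2 = v.2 -> u = v.
Proof. by case: u v => [l c] [l' c'] /val_inj /= -> ->. Qed.

Lemma flipbitE c k j : flipbit c k j = if nat_of_ord j == k then ~~ c j else c j.
Proof. by rewrite ffunE. Qed.

Lemma flipbit_id c k (j : 'I_d) : nat_of_ord j != k -> flipbit c k j = c j.
Proof. by rewrite flipbitE => /negbTE ->. Qed.

Lemma flipbitK k : involutive (flipbit^~ k).
Proof. by move=> c; apply/ffunP=> j; rewrite !flipbitE; case: eqP; rewrite ?negbK. Qed.

Lemma flipbit_neq c k : k < d -> flipbit c k != c.
Proof.
move=> kd; apply/eqP => /ffunP /(_ (Ordinal kd)).
by rewrite flipbitE eqxx; case: (c _).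
Qed.

Lemma spliceE t b k j : splice t b k j = if j < k then t j else b j.
Proof. by rewrite ffunE. Qed.

Lemma splice_id c k : splice c c k = c.
Proof. by apply/ffunP=> j; rewrite spliceE; case: ifP. Qed.

Lemma bf_arcE (u v : V) : bf_arc u v =
  (level v == (level u).+1) && ((v.2 == u.2) || (v.2 == flipbit u.2 (level u))).
Proof.
rewrite /bf_arc /level; case: eqP => //= lv.
have ud : val u.1 < d by have := ltn_ord v.1; rewrite lv ltnS.
apply/existsP/idP => [[i /andP[/eqP iu]]|flip]; last first.
  exists (Ordinal ud); rewrite eqxx; case/orP: flip => [->//|/eqP->].
  by apply/orP; right; apply/eqP/ffunP => j; rewrite !ffunE.
case/orP=> [->//|/eqP->]; apply/orP; right; apply/eqP/ffunP => j.
by rewrite !ffunE -iu.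
Qed.

Lemma adj_sym : symmetric adj.
Proof. by move=> u v; rewrite /bf_adj orbC. Qed.

Lemma adj_step (u v : V) : adj u v -> level v = (level u).+1 \/ level u = (level v).+1.
Proof. by rewrite /bf_adj !bf_arcE => /orP[|] /andP[/eqP-> _]; [left|right]. Qed.

Lemma adj_bits (u v : V) (j : 'I_d) : adj u v ->
  nat_of_ord j != minn (level u) (level v) -> u.2 j = v.2 j.
Proof.
rewrite /bf_adj !bf_arcE => /orP[|] /andP[/eqP lv /orP[/eqP->//|/eqP->]];
  by rewrite lv ?(minn_idPl (leqnSn _)) ?(minn_idPr (leqnSn _)) => /flipbit_id ->.
Qed.

Lemma walk_crosses_bit x y p (m : 'I_d) : walk adj x y p -> x.2 m != y.2 m ->
  (exists2 w, w \in x :: p & level w = m) /\ (exists2 w, w \in x :: p & level w = m.+1).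
Proof.
elim: p x => [|z p IH] x; first by rewrite walk_nil => /eqP ->; rewrite eqxx.
rewrite walk_cons => /andP[xz wz] xy.
have [m_min|m_other] := eqVneq (nat_of_ord m) (minn (level x) (level z)); last first.
  rewrite (adj_bits xz m_other) in xy.
  have [[w1 w1p l1] [w2 w2p l2]] := IH z wz xy.
  by split; [exists w1|exists w2]; rewrite // inE ?w1p ?w2p orbT.
have xin : x \in x :: z :: p := mem_head _ _.
have zin : z \in x :: z :: p by rewrite !inE eqxx orbT.
case: (adj_step xz) => lz.
  by split; [exists x|exists z] => //; lia.
by split; [exists z|exists x] => //; lia.
Qed.

(* A walk of length [level y - level x] stays between the two levels, so below
   [level w] it has already copied the bits of [y], and from [level w] on it
   still carries those of [x]. *)
Lemma tight_walk_splice x y p w : walk adj x y p -> level x + size p = level y ->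
  w \in x :: p -> w.2 = splice y.2 x.2 (level w).
Proof.
move=> wp tight /(walk_split wp)[p1 [p2 [sp w1 w2]]].
have := walk_level_bound adj_step w1; have := walk_level_bound adj_step w2.
rewrite {}sp size_cat in tight => b2 b1.
apply/ffunP => j; rewrite spliceE; case: ltnP => hj; apply/eqP; apply: contraT => bj.
- have [[v vp lv] _] := walk_crosses_bit w2 bj.
  by have := walk_level_via adj_step w2 vp; lia.
- rewrite eq_sym in bj; have [_ [v vp lv]] := walk_crosses_bit w1 bj.
  by have := walk_level_via adj_step w1 vp; lia.
Qed.

Definition rev_bits (c : B) : B := [ffun j => c (rev_ord j)].
Definition mirror (v : V) : V := (rev_ord v.1, rev_bits v.2).

Lemma rev_bitsK : involutive rev_bits.
Proof. by move=> c; apply/ffunP=> j; rewrite !ffunE rev_ordK. Qed.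

Lemma mirrorK : involutive mirror.
Proof. by case=> l c; rewrite /mirror /= rev_ordK rev_bitsK. Qed.

Lemma mirror_inj : injective mirror.
Proof. exact: inv_inj mirrorK. Qed.

Lemma level_mirror v : level (mirror v) = d - level v.
Proof. by rewrite /level /= subSS. Qed.

Lemma rev_bits_flip c k : k < d -> rev_bits (flipbit c k) = flipbit (rev_bits c) (d.-1 - k).
Proof.
move=> kd; apply/ffunP=> j; rewrite !ffunE /=; have jd := ltn_ord j.
by rewrite (_ : (d - j.+1 == k) = (nat_of_ord j == d.-1 - k)) //; apply/eqP/eqP; lia.
Qed.

Lemma arc_mirror u v : bf_arc u v -> bf_arc (mirror v) (mirror u).
Proof.
rewrite !bf_arcE !level_mirror /= => /andP[/eqP lv flip].
have ud : level u < d by have := level_le v; lia.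
apply/andP; split; first by apply/eqP; lia.
case/orP: flip => /eqP->; first by rewrite eqxx.
rewrite rev_bits_flip // (_ : d - level v = d.-1 - level u); last by lia.
by rewrite flipbitK eqxx orbT.
Qed.

Lemma adj_mirror u v : adj (mirror u) (mirror v) = adj u v.
Proof.
suff imp : forall a b, adj a b -> adj (mirror a) (mirror b).
  by apply/idP/idP => [/imp|/imp //]; rewrite !mirrorK.
by move=> a b; rewrite /bf_adj => /orP[|] /arc_mirror ->; rewrite ?orbT.
Qed.

Lemma splice_succ t b (o : 'I_d) :
  splice t b o.+1 = if t o == b o then splice t b o else flipbit (splice t b o) o.
Proof.
apply/ffunP => j; rewrite (fun_if (fun c : B => c j)) flipbitE !spliceE ltnS leq_eqVlt.
have [-> | jo] := eqVneq j o; first by rewrite eqxx ltnn; case: (t o); case: (b o).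
by rewrite (inj_eq val_inj) (negbTE jo) /= if_same.
Qed.

Definition ladder (t b : B) (k : nat) : V := vtx k (splice t b k).

Lemma ladder_adj t b k : k < d -> adj (ladder t b k) (ladder t b k.+1).
Proof.
move=> kd; rewrite /bf_adj bf_arcE /ladder !level_vtx ?eqxx //=; last exact: ltnW.
have -> : k = Ordinal kd by [].
by rewrite splice_succ; case: (t _ == b _); rewrite eqxx ?orbT.
Qed.

Lemma ladder_walk t b i n : i + n <= d ->
  walk adj (ladder t b i) (ladder t b (i + n)) (map (ladder t b) (iota i.+1 n)).
Proof.
elim: n i => [|n IH] i h; first by rewrite addn0 walk_nil.
by rewrite /= walk_cons ladder_adj -?addSnnS ?IH //; lia.
Qed.

(* A monotone walk climbs from [u] to [v], see [up_walk]. *)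
Definition ascends (u v : V) : bool :=
  (level u <= level v) &&
  [forall j : 'I_d, (j < level u) || (level v <= j) ==> (u.2 j == v.2 j)].

Lemma ascendsP u v : reflect
  (level u <= level v /\ forall j : 'I_d, j < level u \/ level v <= j -> u.2 j = v.2 j)
  (ascends u v).
Proof.
apply: (iffP andP) => [[uv /forallP agree]|[uv agree]]; split=> //.
  by move=> j /orP /(implyP (agree j)) /eqP.
by apply/forallP => j; apply/implyP => /orP /agree ->.
Qed.

Lemma up_walk x y : ascends x y -> exists q,
  [/\ walk adj x y q, size q = level y - level x &
      forall w, w \in internal x q -> level x < level w < level y].
Proof.
case/ascendsP => xy agree.
have ex : ladder y.2 x.2 (level x) = x.
  rewrite -[RHS]vtx_level; congr vtx; apply/ffunP => j.
  by rewrite spliceE; case: ltnP => // jx; rewrite agree //; left.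
have ey : ladder y.2 x.2 (level y) = y.
  rewrite -[RHS]vtx_level; congr vtx; apply/ffunP => j.
  by rewrite spliceE; case: ltnP => // jy; rewrite agree //; right.
have := @ladder_walk y.2 x.2 (level x) (level y - level x).
rewrite subnKC // ex ey => /(_ (level_le y)) wq.
exists (map (ladder y.2 x.2) (iota (level x).+1 (level y - level x))).
split=> //; first by rewrite size_map size_iota.
case E: (level y - level x) => [//|n] w.
rewrite -[n.+1]addn1 iotaD map_cat cats1 internal_rcons => /mapP[k]; rewrite mem_iota => hk ->.
by rewrite level_vtx; have := level_le y; lia.
Qed.

(** * Lower bound *)

Definition zero_bits : B := [ffun => false].

Definition X0 : {set V} :=
  [set v | ((level v == 0) && (v != vtx 0 zero_bits))
        || ((level v == d) && (v != vtx d zero_bits))].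

Lemma level_X0 v : v \in X0 -> level v = 0 \/ level v = d.
Proof. by rewrite inE => /orP[] /andP[/eqP ? _]; [left|right]. Qed.

Lemma notin_X0 v : 0 < level v < d -> v \notin X0.
Proof. by move=> lv; apply/negP => /level_X0[]; lia. Qed.

Lemma mirror_vtx k c : k <= d -> mirror (vtx k c) = vtx (d - k) (rev_bits c).
Proof. by move=> kd; apply: vertex_eq; rewrite // level_mirror !level_vtx ?leq_subr. Qed.

Lemma rev_zero_bits : rev_bits zero_bits = zero_bits.
Proof. by apply/ffunP => j; rewrite !ffunE. Qed.

Lemma mirror_X0 : mirror @: X0 = X0.
Proof.
apply/setP => v; rewrite (can_imset_pre _ mirrorK) !inE level_mirror.
rewrite !(can2_eq mirrorK mirrorK) !mirror_vtx // rev_zero_bits subn0 subnn.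
have lv := level_le v.
rewrite (_ : (d - level v == 0) = (level v == d)); last by apply/eqP/eqP; lia.
rewrite (_ : (d - level v == d) = (level v == 0)); last by apply/eqP/eqP; lia.
by rewrite orbC.
Qed.

Lemma X0_visible_across x y : level x = 0 -> level y = d -> Xvisible adj X0 x y.
Proof.
move=> x0 yd; have /up_walk[q [wq sq inner]] : ascends x y.
  by apply/ascendsP; rewrite x0 yd; split=> // j [//|]; rewrite leqNgt ltn_ord.
apply: (Xvisible_walk wq).
  by move=> r /(walk_level_bound adj_step); lia.
by apply/allP => w /inner lw; apply: notin_X0; lia.
Qed.

Lemma zero_prefix_notin_X0 c k : 0 < k <= d -> vtx k (splice zero_bits c k) \notin X0.
Proof.
case/andP=> k0 kd; have [kd'|] := ltnP k d; first by apply: notin_X0; rewrite level_vtx ?k0.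
move/(conj kd)/andP/anti_leq => ->.
have -> : splice zero_bits c d = zero_bits.
  by apply/ffunP => j; rewrite spliceE ltn_ord ffunE.
by rewrite inE level_vtx // !eqxx /= eqn0Ngt (leq_trans k0 kd).
Qed.

Lemma X0_visible_bottom x y : level x = 0 -> level y = 0 -> x != y -> Xvisible adj X0 x y.
Proof.
move=> x0 y0 nxy.
have [m [xym above]] : exists m : 'I_d, x.2 m != y.2 m /\ forall j : 'I_d, m < j -> x.2 j = y.2 j.
  by apply: exists_max_diff; apply: contra nxy => /eqP xy; apply/eqP/vertex_eq; rewrite ?x0.
have mlt := ltn_ord m.
set top := vtx m.+1 (splice zero_bits x.2 m.+1).
have ltop : level top = m.+1 by rewrite level_vtx.
have to_top z : level z = 0 -> (forall j : 'I_d, m < j -> z.2 j = x.2 j) -> ascends z top.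
  move=> z0 zx; apply/ascendsP; rewrite ltop z0; split=> // j [//|mj].
  by rewrite ffunE ltnNge mj zx.
have [q1 [w1 s1 in1]] := up_walk (to_top x x0 (fun _ _ => erefl)).
have [q2 [w2 s2 in2]] := up_walk (to_top y y0 (fun j mj => esym (above j mj))).
apply: (Xvisible_walk (p := q1 ++ rev (belast y q2))).
- by rewrite walk_cat (walk_last w1) w1 walk_rev //; exact: adj_sym.
- move=> r wr; have [_ [w wr' lw]] := walk_crosses_bit wr xym.
  have := walk_level_via adj_step wr wr'.
  by rewrite size_cat size_rev size_belast s1 s2 ltop x0 y0; lia.
apply/allP => w /mem_internal_cat; rewrite (walk_last w1) (mem_internal_rev _ w2).
case=> [/in1 lw|->|/in2 lw].
- by apply: notin_X0; lia.
- exact: (@zero_prefix_notin_X0 x.2 m.+1 mlt).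
- by apply: notin_X0; lia.
Qed.

Lemma X0_visible_from_bottom x y : y \in X0 -> x != y -> level x = 0 ->
  Xvisible adj X0 x y.
Proof.
move=> /level_X0[y0|yd] nxy x0; [exact: X0_visible_bottom | exact: X0_visible_across].
Qed.

Lemma X0_mutual_visibility : mutual_visibility_set adj X0.
Proof.
move=> x y xX yX nxy; have [x0|xd] := level_X0 xX.
  exact: X0_visible_from_bottom.
rewrite -mirror_X0 -(mirrorK x) -(mirrorK y).
apply: (Xvisible_map mirrorK adj_mirror); apply: X0_visible_from_bottom.
- by rewrite -mirror_X0 mem_imset //; exact: mirror_inj.
- by rewrite (inj_eq mirror_inj).
- by rewrite level_mirror xd subnn.
Qed.

Lemma card_level k : k <= d -> #|[set v : V | level v == k]| = 2 ^ d.
Proof.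
move=> kd; have -> : [set v : V | level v == k] = [set vtx k c | c in [set: B]].
  apply/setP=> v; rewrite inE; apply/eqP/imsetP => [<-|[c _ ->]]; last exact: level_vtx.
  by exists v.2; rewrite ?inE // vtx_level.
rewrite card_imset ?cardsT ?card_ffun ?card_bool ?card_ord //.
by move=> c c' /(congr1 snd).
Qed.

Lemma card_X0 : 0 < d -> #|X0| = 2 ^ d.+1 - 2.
Proof.
move=> d0; set L0 := [set v : V | level v == 0]; set Ld := [set v : V | level v == d].
have -> : X0 = (L0 :\ vtx 0 zero_bits) :|: (Ld :\ vtx d zero_bits).
  by apply/setP=> v; rewrite !inE andbC [_ && (_ == d)]andbC.
have disj : (L0 :\ vtx 0 zero_bits) :&: (Ld :\ vtx d zero_bits) = set0.
  apply/setP => v; rewrite !inE; apply/negP => /andP[/andP[_ /eqP->] /andP[_]].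
  by rewrite eq_sym eqn0Ngt d0.
have c0 := cardsD1 (vtx 0 zero_bits) L0; have cd := cardsD1 (vtx d zero_bits) Ld.
rewrite !card_level // !inE !level_vtx // !eqxx in c0 cd.
rewrite cardsU disj cards0 expnS; have := expn_gt0 2 d; lia.
Qed.

(** * Upper bound *)

Lemma ascends_lt u v : ascends u v -> u != v -> level u < level v.
Proof.
case/ascendsP => uv agree; rewrite ltn_neqAle uv andbT; apply: contra => /eqP e.
apply/eqP/vertex_eq => //; apply/ffunP => j; apply: agree.
by case: (ltnP j (level u)) => h; [left|right; rewrite -e].
Qed.

Lemma geodesic_vertex_blocks (X : {set V}) x y z : ascends x y ->
  level x < level z < level y -> z.2 = splice y.2 x.2 (level z) -> z \in X ->
  ~ Xvisible adj X x y.
Proof.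
move=> xy lz zs zX; have [q [wq sq _]] := up_walk xy.
apply: (not_Xvisible wq) => p wp sp.
have [b1 b2] := walk_level_bound adj_step wp.
have [w wp' lw] := walk_level_ivt adj_step (k := level z) wp ltac:(lia).
have wz : w = z.
  by apply: vertex_eq; rewrite // (tight_walk_splice wp _ wp') ?lw //; lia.
by exists z; [rewrite -wz | split=> //; apply/eqP => e; move: lz; rewrite e; lia].
Qed.

(* Every geodesic from [x] to [y] climbs the column of [x] up to level
   [(level y).+1] and then steps down to [y]. *)
Lemma detour_blocks (X : {set V}) x y z :
  level x < level z <= level y -> level y < d ->
  x.2 = flipbit y.2 (level y) -> z.2 = x.2 -> z \in X -> ~ Xvisible adj X x y.
Proof.
move=> lz yd xy zx zX; set top := vtx (level y).+1 x.2.
have ltop : level top = (level y).+1 by rewrite level_vtx.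
have /up_walk[q [wq sq _]] : ascends x top.
  by apply/ascendsP; rewrite ltop; split=> //; lia.
have top_y : adj top y.
  by rewrite /bf_adj [bf_arc y _]bf_arcE ltop eqxx /= xy eqxx !orbT.
have wq' : walk adj x y (rcons q y).
  by rewrite -cats1 walk_cat (walk_last wq) wq walk_cons top_y walk_nil eqxx.
have bit_y : x.2 (Ordinal yd) != y.2 (Ordinal yd).
  by rewrite xy flipbitE eqxx; case: (y.2 _).
apply: (not_Xvisible wq') => p wp; rewrite size_rcons sq ltop => sp.
case/(walk_crosses_bit wp): bit_y => _ [w wp' /= lw].
have [p1 [p2 [Ep w1 w2]]] := walk_split wp wp'; subst p.
have [b1 _] := walk_level_bound adj_step w1; have [_ b2] := walk_level_bound adj_step w2.
rewrite size_cat in sp; have tight : level x + size p1 = level w by lia.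
have {sp b2 wp wp'} : size p2 = 1 by lia.
case: p2 w2 => [|y' [|]] // w2 _.
move: w2; rewrite walk_cons walk_nil => /andP[wy /eqP yy]; subst y'.
have [v vp lv] := walk_level_ivt adj_step (k := level z) w1 ltac:(lia).
have vz : v = z.
  apply: vertex_eq => //; rewrite (tight_walk_splice w1 tight vp) zx lv.
  apply/ffunP => j; rewrite spliceE; case: ltnP => // jz.
  by rewrite (adj_bits wy) ?xy ?flipbit_id //; apply/eqP; lia.
exists z; first by rewrite -vz -cat_cons mem_cat vp.
split=> //; first by apply/eqP => e; move: lz; rewrite e; lia.
have : z.2 != y.2 by rewrite zx xy flipbit_neq.
by apply: contraNneq => ->.
Qed.

Lemma detour_blocks_down (X : {set V}) x y z :
  0 < level y <= level z -> level z < level x ->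
  x.2 = flipbit y.2 (level y).-1 -> z.2 = x.2 -> z \in X -> ~ Xvisible adj X x y.
Proof.
move=> lyz lzx xy zx zX /(Xvisible_map mirrorK adj_mirror).
have lx := level_le x.
apply: (detour_blocks (z := mirror z)); rewrite ?level_mirror ?mem_imset //=.
- by lia.
- by lia.
- by rewrite xy rev_bits_flip; [congr flipbit|]; lia.
- by rewrite zx.
- exact: mirror_inj.
Qed.

Lemma full_level_blocks (X : {set V}) (x y : V) (m : 'I_d) :
  (forall v, level v = m -> v \in X) -> x.2 m != y.2 m ->
  level x != m -> level y != m -> ~ Xvisible adj X x y.
Proof.
move=> full xy xm ym [p [[wp _] avoid]].
have [[w wp' lw] _] := walk_crosses_bit wp xy.
have wx : w != x by apply: contraNneq xm => <-; rewrite lw.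
have wy : w != y by apply: contraNneq ym => <-; rewrite lw.
by have := allP avoid w (mem_internal wp wp' wx wy); rewrite full.
Qed.

Definition column (c : B) : {set V} := [set v | v.2 == c].
Definition colsize (X : {set V}) (c : B) : nat := #|X :&: column c|.

Lemma colsize_mirror (X : {set V}) c : colsize (mirror @: X) c = colsize X (rev_bits c).
Proof.
rewrite /colsize (can_imset_pre _ mirrorK).
rewrite -(card_preimset (X :&: column (rev_bits c)) mirror_inj).
by apply: eq_card => v; rewrite !inE (inj_eq (inv_inj rev_bitsK)).
Qed.

Lemma card_colsize (X : {set V}) : #|X| = \sum_c colsize X c.
Proof.
rewrite -sum1_card (partition_big (fun v : V => v.2) predT) //.
by apply: eq_bigr => c _; rewrite /colsize -sum1_card; apply: eq_bigl => v; rewrite !inE.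
Qed.

Lemma column_vertex (X : {set V}) c : 0 < colsize X c -> exists2 a, a \in X & a.2 = c.
Proof. by rewrite card_gt0 => /set0Pn[a]; rewrite !inE => /andP[aX /eqP]; exists a. Qed.

Lemma level_neq (u w : V) : u.2 = w.2 -> u != w -> level u != level w.
Proof. by move=> uw; apply: contra => /eqP luw; apply/eqP/vertex_eq. Qed.

Lemma column_pair (X : {set V}) c : 1 < colsize X c ->
  exists a b, [/\ a \in X, b \in X, a.2 = c, b.2 = c & level a < level b].
Proof.
case/card_gt1P => [a [b [+ + ab]]]; rewrite !inE => /andP[aX /eqP ac] /andP[bX /eqP bc].
have := level_neq (etrans ac (esym bc)) ab.
by case: ltngtP => // lab _; [exists a, b | exists b, a].
Qed.

Lemma thin_column_eq (X : {set V}) c a b : colsize X c <= 1 -> a \in X -> b \in X ->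
  a.2 = c -> b.2 = c -> a = b.
Proof.
move=> thin aX bX ac bc; apply/eqP; apply: contraTT thin => ab.
by rewrite -ltnNge; apply/card_gt1P; exists a, b; rewrite !inE aX bX ac bc !eqxx.
Qed.

Section UpperBound.
Variable X : {set V}.
Hypothesis mv : mutual_visibility_set adj X.

Lemma colsize_le2 c : colsize X c <= 2.
Proof.
rewrite /colsize; set S := X :&: column c.
have [->|[a Sa]] := set_0Vmem S; first by rewrite cards0.
have [lo Slo lo_min] := @arg_minnP _ a (fun v => v \in S) level Sa.
have [hi Shi hi_max] := @arg_maxnP _ a (fun v => v \in S) level Sa.
apply: leq_trans (subset_leq_card (_ : S \subset [set lo; hi])) _; last first.
  by rewrite cards2; case: (_ != _).
apply/subsetP => v Sv; rewrite !inE; apply: contraT; rewrite negb_or => /andP[vlo vhi].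
have lov : level lo <= level v := lo_min v Sv.
have vhi' : level v <= level hi := hi_max v Sv.
move: Slo Shi Sv; rewrite !inE => /andP[loX /eqP loc] /andP[hiX /eqP hic] /andP[vX /eqP vc].
have lo_v : level lo < level v.
  by rewrite ltn_neqAle lov andbT eq_sym level_neq // loc vc.
have v_hi : level v < level hi.
  by rewrite ltn_neqAle vhi' andbT level_neq // vc hic.
exfalso; apply: (geodesic_vertex_blocks (z := v) _ _ _ vX) (mv loX hiX _).
- by apply/ascendsP; split=> [|j _]; [lia | rewrite loc hic].
- by rewrite lo_v v_hi.
- by rewrite vc loc hic splice_id.
- by apply/eqP => e; move: lo_v v_hi; rewrite e; lia.
Qed.

Lemma no_ascending_triple u v w : u \in X -> v \in X -> w \in X ->
  w != u -> u != v -> ascends w u -> ascends u v -> False.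
Proof.
move=> uX vX wX wu uv wu_asc uv_asc.
have lwu := ascends_lt wu_asc wu; have luv := ascends_lt uv_asc uv.
case/ascendsP: wu_asc => _ agree_wu; case/ascendsP: uv_asc => _ agree_uv.
apply: (geodesic_vertex_blocks (z := u) _ _ _ uX) (mv wX vX _).
- apply/ascendsP; split=> [|j hj]; first by lia.
  by rewrite agree_wu ?agree_uv //; lia.
- by rewrite lwu luv.
- apply/ffunP => j; rewrite spliceE; case: ltnP => hj.
    by rewrite agree_uv //; left.
  by rewrite agree_wu //; right.
- by apply/eqP => e; move: lwu luv; rewrite e; lia.
Qed.

Lemma thin_above u : u \in X -> level u < d ->
  (forall v, v \in X -> ascends u v -> v = u) -> colsize X (flipbit u.2 (level u)) <= 1.
Proof.
move=> uX ud top; rewrite leqNgt; apply/negP => /column_pair[a [b [aX bX ac bc lab]]].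
have flip_u c : c = flipbit u.2 (level u) -> c != u.2 by move=> ->; rewrite flipbit_neq.
have [ub|bu] := ltnP (level u) (level b).
  have := flip_u _ bc; rewrite (top b bX) ?eqxx //.
  apply/ascendsP; split=> [|j hj]; first by lia.
  by rewrite bc flipbit_id //; apply/eqP; lia.
apply: (detour_blocks (z := b) _ _ _ _ bX) (mv aX uX _) => //.
- by rewrite lab.
- by rewrite ac bc.
- by apply: contra (flip_u _ ac) => /eqP ->.
Qed.

Lemma thin_below u : u \in X -> 0 < level u ->
  (forall w, w \in X -> ascends w u -> w = u) -> colsize X (flipbit u.2 (level u).-1) <= 1.
Proof.
move=> uX u0 bottom; rewrite leqNgt; apply/negP => /column_pair[a [b [aX bX ac bc lab]]].
have ud : (level u).-1 < d by have := level_le u; lia.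
have flip_u c : c = flipbit u.2 (level u).-1 -> c != u.2 by move=> ->; rewrite flipbit_neq.
have [au|ua] := ltnP (level a) (level u).
  have := flip_u _ ac; rewrite (bottom a aX) ?eqxx //.
  apply/ascendsP; split=> [|j hj]; first by lia.
  by rewrite ac flipbit_id //; apply/eqP; lia.
apply: (detour_blocks_down (z := a) _ _ _ _ aX) (mv bX uX _) => //.
- by rewrite u0 ua.
- by rewrite ac bc.
- by apply: contra (flip_u _ bc) => /eqP ->.
Qed.

Section ThinColumnsAtBottom.
Hypothesis col_nonempty : forall c, 0 < colsize X c.
Hypothesis thin_unique : forall c c', colsize X c <= 1 -> colsize X c' <= 1 -> c = c'.
Hypothesis thin_bottom : forall t, t \in X -> colsize X t.2 <= 1 -> level t = 0.

Lemma ascending_predecessor u : u \in X -> 0 < level u ->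
  [exists w in X, (w != u) && ascends w u].
Proof.
move=> uX u0; apply: contraT => /exists_inPn none.
have thin : colsize X (flipbit u.2 (level u).-1) <= 1.
  apply: thin_below => // w wX wu; apply/eqP.
  by move: (none w wX); rewrite wu andbT negbK.
have [t tX tc] := column_vertex (col_nonempty (flipbit u.2 (level u).-1)).
have t0 : level t = 0 by apply: thin_bottom; rewrite ?tc.
have /negP[] := none t tX; apply/andP; split.
  by apply/eqP => e; move: u0; rewrite -e t0.
apply/ascendsP; rewrite t0; split=> // j [//|uj].
by rewrite tc flipbit_id //; apply/eqP; lia.
Qed.

Lemma bottom_level_in v : level v = 0 -> v \in X.
Proof.
move=> v0; have [thin|thick] := leqP (colsize X v.2) 1.
  have [t tX tv] := column_vertex (col_nonempty v.2).
  have t0 : level t = 0 by apply: thin_bottom; rewrite ?tv.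
  by have <- : t = v by apply: vertex_eq; rewrite ?t0.
have [a [b [aX bX av bv lab]]] := column_pair thick.
have [a0|a0] := posnP (level a).
  by have <- : a = v by apply: vertex_eq; rewrite ?a0.
have /exists_inP[w wX /andP[wa wa_asc]] := ascending_predecessor aX a0.
exfalso; apply: (no_ascending_triple aX bX wX wa _ wa_asc).
  by apply/eqP => e; move: lab; rewrite e ltnn.
by apply/ascendsP; split=> [|j _]; [exact: ltnW | rewrite av bv].
Qed.

Lemma thin_bottom_contradiction : 1 < d -> False.
Proof.
move=> d1; have d0 : 0 < d by exact: ltnW.
pose o0 : 'I_d := Ordinal d0; pose o1 : 'I_d := Ordinal d1.
have [c thick thick'] : exists2 c, 1 < colsize X c & 1 < colsize X (flipbit c 0).
  have [/existsP[e thin_e]|/existsPn none] := boolP [exists e, colsize X e <= 1].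
    exists (flipbit e 1); rewrite ltnNge; apply/negP => /(thin_unique thin_e) /eqP; apply/negP.
      by rewrite eq_sym flipbit_neq.
    by apply/eqP => /ffunP /(_ o1); rewrite !flipbitE /=; case: (e o1).
  by exists zero_bits; rewrite ltnNge none.
have [a [b [_ bX _ bc lab]]] := column_pair thick.
have [a' [b' [_ b'X _ b'c la'b']]] := column_pair thick'.
have bits : b.2 o0 != b'.2 o0 by rewrite bc b'c flipbitE /=; case: (c o0).
apply: (full_level_blocks (m := o0) bottom_level_in bits) (mv bX b'X _).
- by apply/eqP => /= e; move: lab; rewrite e.
- by apply/eqP => /= e; move: la'b'; rewrite e.
- by apply: contraNneq bits => ->.
Qed.

End ThinColumnsAtBottom.

Lemma thin_vertex_at_end t :
  (forall c c', colsize X c <= 1 -> colsize X c' <= 1 -> c = c') ->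
  t \in X -> colsize X t.2 <= 1 -> level t = 0 \/ level t = d.
Proof.
move=> thin_unique tX thin; have [t0|t0] := posnP (level t); first by left.
have [td|] := ltnP (level t) d; last by have := level_le t; right; lia.
exfalso.
have flip_thin k : k < d -> colsize X (flipbit t.2 k) <= 1 -> False.
  by move=> kd /(thin_unique _ _ thin) /esym /eqP; apply/negP; exact: flipbit_neq kd.
have [/exists_inP[v vX /andP[vt tv]]|/exists_inPn top] :=
  boolP [exists v in X, (v != t) && ascends t v].
- apply: (flip_thin (level t).-1); first by lia.
  apply: thin_below => // w wX wt; apply/eqP; apply: contraT => wt'.
  by case: (no_ascending_triple tX vX wX wt' _ wt tv); rewrite eq_sym.
- apply: (flip_thin (level t) td); apply: thin_above => // v vX tv.
  by apply/eqP; move: (top v vX); rewrite tv andbT negbK.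
Qed.

End UpperBound.

(* Up to [mirror], the vertex of the thin column, if any, lies at level 0. *)
Lemma no_near_full_columns (X : {set V}) : mutual_visibility_set adj X -> 1 < d ->
  (forall c, 0 < colsize X c) ->
  (forall c c', colsize X c <= 1 -> colsize X c' <= 1 -> c = c') -> False.
Proof.
move=> mv d1 nonempty unique.
have [/exists_inP[t tX /andP[thin /eqP td]]|/exists_inPn low] :=
  boolP [exists t in X, (colsize X t.2 <= 1) && (level t == d)].
- apply: (@thin_bottom_contradiction (mirror @: X) _ _ _ _ d1).
  + exact: (mutual_visibility_map mirrorK adj_mirror mv).
  + by move=> c; rewrite colsize_mirror.
  + by move=> c c'; rewrite !colsize_mirror => /unique h /h /(can_inj rev_bitsK).
  + move=> _ /imsetP[u uX ->]; rewrite colsize_mirror /= rev_bitsK => thin_u.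
    have -> : u = t by apply: (thin_column_eq thin_u) => //; apply: unique.
    by rewrite level_mirror td subnn.
- apply: (thin_bottom_contradiction mv nonempty unique _ d1) => t tX thin.
  have [//|td] := thin_vertex_at_end mv unique tX thin.
  by have := low t tX; rewrite thin td eqxx.
Qed.

Lemma card_mutual_visibility_le (X : {set V}) : mutual_visibility_set adj X -> 1 < d ->
  #|X| <= 2 ^ d.+1 - 2.
Proof.
move=> mv d1; rewrite card_colsize.
have -> : 2 ^ d.+1 = 2 * #|{: B}| by rewrite card_ffun card_bool card_ord expnS.
apply: sum_le_deficit => [c|]; first exact: colsize_le2.
have [/existsP[c /eqP c0]|/existsPn nonempty] := boolP [exists c, colsize X c == 0].
  by left; exists c.
have [/existsP[c /existsP[c' /and3P[cc' tc tc']]]|/existsPn none] :=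
  boolP [exists c, exists c', [&& c != c', colsize X c <= 1 & colsize X c' <= 1]].
  by right; exists c, c'.
exfalso; apply: (no_near_full_columns mv d1) => [c|c c' tc tc'].
  by rewrite lt0n nonempty.
apply/eqP; apply: contraT => cc'.
by move: (none c) => /existsPn /(_ c'); rewrite cc' tc tc'.
Qed.

End Butterfly.

Theorem theorem5p4 (d : nat) (hd : 2 <= d) :
  is_mu (bf_adj d) (2 ^ d.+1 - 2).
Proof.
have d0 : 0 < d by exact: ltnW.
split; first by exists (X0 d); split; [exact: X0_mutual_visibility | exact: card_X0].
by move=> X mv; exact: card_mutual_visibility_le.
Qed.
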